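(* The transition kernel $\hat\pi^{(\epsilon)}(x,dy)$ converges in total variation to $W_1(dy)$ uniformly in $x$: $\sup_{x\in\Omega_1}d_{TV}(\hat\pi^{(\epsilon)}(x,\cdot),W_1)\to0$ as $\epsilon\to0$. Moreover, for any $\gamma\in(0,1)$ there is $\epsilon_0=\epsilon_0(\gamma)$ such that $\hat\pi^{(\epsilon)}(x,A)\ge\gamma W_1(A)$ for all $x\in\Omega_1$, all Borel $A\subseteq\Omega_1$ and all $\epsilon<\epsilon_0$.
   Context: $\phi,\psi$ positive smooth, $\phi$ supported in $[0,1]$, $\psi:\mathbb{R}^2\to\mathbb{R}$ symmetric supported in $\{|x|\le1/2\}$, $R(s,y)=(\phi\star\tilde\phi)(s)(\psi\star\psi)(y)$, $\tilde\phi(s)=\phi(-s)$. Fix $\hat\beta>0$, let $\beta_\epsilon=\hat\beta/\sqrt{\log(1/\epsilon)}$. $\Omega_1=\{\omega\in C([0,1];\mathbb{R}^2):\omega(0)=0\}$, $W_1$ Wiener measure on $\Omega_1$, $\hat{\mathbb{P}}^{(\epsilon)}_1(dx)\propto\exp\big(\frac{\beta_\epsilon^2}{2}\int_{[0,1]^2}R(s-u,x(s)-x(u))dsdu\big)W_1(dx)$ normalized to a probability. $I^{(\epsilon)}(x,y)=\beta_\epsilon^2\int_{[0,1]^2}R(s-u,y(s)+x(1)-x(u))dsdu$ for $x,y\in\Omega_1$. Let $\rho^{(\epsilon)}>0$ be the largest eigenvalue and $\Psi^{(\epsilon)}$ the (unique) associated eigenfunction of $\int_{\Omega_1}e^{I^{(\epsilon)}(x,y)}\Psi(y)\hat{\mathbb{P}}^{(\epsilon)}_1(dy)=\rho\Psi(x)$,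 with $\Psi^{(\epsilon)}$ bounded above and below by positive constants and $\int\Psi^{(\epsilon)}d\hat{\mathbb{P}}^{(\epsilon)}_1=1$. Define $\hat\pi^{(\epsilon)}(x,dy)=\frac{e^{I^{(\epsilon)}(x,y)}\Psi^{(\epsilon)}(y)\hat{\mathbb{P}}^{(\epsilon)}_1(dy)}{\rho^{(\epsilon)}\Psi^{(\epsilon)}(x)}$. *)

From HB Require Import structures.
From mathcomp Require Import all_boot all_order all_algebra.
From mathcomp Require Import all_classical all_reals all_analysis.
Set Implicit Arguments. Unset Strict Implicit. Unset Printing Implicit Defensive.
Import Order.TTheory GRing.Theory Num.Theory.
Import numFieldNormedType.Exports.
Local Open Scope classical_set_scope.
Local Open Scope ring_scope.

Section Defs.
Context {R : realType}.

Definition dot2 (a b : R * R) : R := a.1 * b.1 + a.2 * b.2.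
Definition eucl (a : R * R) : R := Num.sqrt (a.1 ^+ 2 + a.2 ^+ 2).

(** Omega_1 = { omega in C([0,1]; R^2) : omega 0 = 0 }.
    A continuous path on [0,1] is represented canonically by the function
    R -> R^2 that is constant outside [0,1] (value at the clamped time). *)
Definition clamp01 (t : R) : R := Num.min (Num.max t 0) 1.

Record path2 := Path2 {
  pth :> R -> R * R ;
  pth_cont : continuous pth ;
  pth_clamp : forall t, pth t = pth (clamp01 t) ;
  pth0 : pth 0 = 0 }.

Lemma zero_path_cont : continuous (fun _ : R => (0 : R * R)).
Proof. move=> x; exact: cvg_cst. Qed.

Definition zero_path : path2 :=
  @Path2 (fun _ => 0) zero_path_cont (fun _ => erefl) erefl.

HB.instance Definition _ := gen_eqMixin path2.
HB.instance Definition _ := gen_choiceMixin path2.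
HB.instance Definition _ := isPointed.Build path2 zero_path.

Definition supdist (x y : path2) : R :=
  sup [set eucl (x t - y t) | t in `[0, 1]].

Definition sup_open : set (set path2) :=
  [set A | forall x, A x -> exists2 r : R, 0 < r &
            forall y, supdist x y < r -> A y].

Definition Omega1 := g_sigma_algebraType sup_open.

(** Wiener measure: a probability on Omega_1 whose finite dimensional
    distributions are those of a standard planar Brownian motion
    (centered Gaussian, covariance min(s,t) Id_2), via the characteristic
    function E[exp(i sum_k theta_k . x(t_k))] = exp(-1/2 sum_{j,k} min(t_j,t_k) theta_j.theta_k). *)
Definition is_wiener (W : probability Omega1 R) : Prop :=
  forall (n : nat) (t : 'I_n -> R) (theta : 'I_n -> R * R),
    (forall k, 0 <= t k <= 1) ->
    let S := fun x : Omega1 => \sum_(k < n) dot2 (theta k) (x (t k)) in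
    (\int[W]_x (cos (S x))%:E =
       (expR (- (2^-1) * \sum_(j < n) \sum_(k < n)
                 Num.min (t j) (t k) * dot2 (theta j) (theta k)))%:E)%E /\
    (\int[W]_x (sin (S x))%:E = 0)%E.

Fixpoint iterD {V : normedModType R} (vs : seq V) (f : V -> R^o) : V -> R^o :=
  match vs with
  | [::] => f
  | v :: vs' => fun x => derive (iterD vs' f) x v
  end.
Definition smooth {V : normedModType R} (f : V -> R^o) : Prop :=
  forall (vs : seq V) (v x : V), derivable (iterD vs f) x v.

Definition conv_phi (phi : R -> R) (s : R) : R :=
  Rintegral lebesgue_measure setT (fun u => phi u * phi (u - s)).
Definition conv_psi (psi : R * R -> R) (y : R * R) : R :=
  Rintegral (lebesgue_measure \x lebesgue_measure)%E setT
    (fun z : R * R => psi z * psi (y - z)).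
Definition Rker phi psi (s : R) (y : R * R) : R := conv_phi phi s * conv_psi psi y.

Definition beta_eps (bh eps : R) : R := bh / Num.sqrt (ln (eps^-1)).

Definition int01sq (f : R -> R -> R) : R :=
  Rintegral lebesgue_measure `[0, 1]
    (fun s => Rintegral lebesgue_measure `[0, 1] (fun u => f s u)).

Definition Hdens phi psi bh eps (x : Omega1) : R :=
  expR ((beta_eps bh eps) ^+ 2 / 2 *
        int01sq (fun s u => Rker phi psi (s - u) (x s - x u))).
Definition Zeps phi psi bh eps (W : probability Omega1 R) : R :=
  Rintegral W setT (Hdens phi psi bh eps).
(** density d hat P_1^(eps) / d W_1 *)
Definition Pdens phi psi bh eps (W : probability Omega1 R) (x : Omega1) : R :=
  Hdens phi psi bh eps x / Zeps phi psi bh eps W.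

Definition Ieps phi psi bh eps (x y : Omega1) : R :=
  (beta_eps bh eps) ^+ 2 *
    int01sq (fun s u => Rker phi psi (s - u) (y s + x 1 - x u)).

Definition intPhat phi psi bh eps (W : probability Omega1 R) (A : set Omega1) (g : Omega1 -> R) : \bar R :=
  (\int[W]_(y in A) (g y * Pdens phi psi bh eps W y)%:E)%E.

Definition pihat phi psi bh eps (W : probability Omega1 R) (rho : R) (Psi : Omega1 -> R)
    (x : Omega1) (A : set Omega1) : \bar R :=
  (intPhat phi psi bh eps W A (fun y => expR (Ieps phi psi bh eps x y) * Psi y)%R
   * ((rho * Psi x)^-1)%:E)%E.

Definition dTV (mu nu : set Omega1 -> \bar R) : \bar R :=
  ereal_sup [set `|(mu A - nu A)%E|%E | A in [set A | measurable A]].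

End Defs.

From HB Require Import structures.
From mathcomp Require Import all_boot all_order all_algebra.
From mathcomp Require Import all_classical all_reals all_analysis.
From mathcomp Require Import measurable_realfun ring lra.
Set Implicit Arguments. Unset Strict Implicit. Unset Printing Implicit Defensive.
Import Order.TTheory GRing.Theory Num.Theory.
Import numFieldNormedType.Exports.
Local Open Scope classical_set_scope.
Local Open Scope ring_scope.

(* Write [beta_eps bh eps ^+ 2 = theta * beta_eps bh (1/2) ^+ 2], so that
   [theta = ln 2 / ln eps^-1 -> 0].  The weight [expR (Ieps x y)] times the
   unnormalised density [Hdens y] of [P^] is the exponential of a quantity linear
   in [beta_eps ^+ 2]; by convexity it lies between [1] and [1 + theta * F x y],
   where [F] is the same product at [eps = 1/2], and the eigen-equation at
   [eps = 1/2] bounds [\int F x y dW(y)] by some [K] uniformly in [x].  Feeding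
   these bounds into the eigen-equation at [eps] gives, with [delta = theta * K],
   [rho * Psi >= 1], [rho * Z <= 1 + delta] and [sup (rho * Psi) <= 1/(1 - delta)],
   whence [W A * (1 - 2 delta) <= pihat x A <= W A + 4 delta] for all [x] and [A]. *)

(* [Ieps] and [Hdens] are not known to be measurable.  For nonnegative [f] the
   integral is the supremum of the integrals of simple minorants, which is monotone
   and positively homogeneous without any measurability of [f]. *)
Section ge0_integral_nonmeasurable.
Context d (T : measurableType d) (R : realType) (mu : {measure set T -> \bar R}).
Import HBNNSimple.

Lemma ge0_le_integral_nonmeas (f g : T -> R) :
  (forall x, 0 <= f x) -> (forall x, f x <= g x) ->
  (\int[mu]_x (f x)%:E <= \int[mu]_x (g x)%:E)%E.
Proof.
move=> f0 fg; have g0 x : 0 <= g x by apply: le_trans (fg x).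
rewrite !ge0_integralE ?patch_setT /=; last 2 first.
- by move=> x _; rewrite lee_fin.
- by move=> x _; rewrite lee_fin.
apply: ereal_sup_le => _ [h hf <-]; exists h => //= x.
by apply: le_trans (hf x) _; rewrite lee_fin.
Qed.

Let ge0_integralZl_le (k : R) (f : T -> R) : 0 < k -> (forall x, 0 <= f x) ->
  (\int[mu]_x (k * f x)%:E <= k%:E * \int[mu]_x (f x)%:E)%E.
Proof.
move=> k0 f0.
rewrite !ge0_integralE ?patch_setT /=; last 2 first.
- by move=> x _; rewrite lee_fin.
- by move=> x _; rewrite lee_fin mulr_ge0 // ltW.
apply: ge_ereal_sup => _ [h hf <-].
have ki : 0 <= k^-1 by rewrite invr_ge0 ltW.
pose h' := scale_nnsfun h ki.
have -> : sintegral mu h = sintegral mu (cst k \* h')%R.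
  by apply: eq_sintegral => x /=; rewrite mulrA mulfV ?mul1r ?gt_eqF.
rewrite sintegralrM lee_pmul2l ?lte_fin //; apply: ereal_sup_ubound.
exists h' => //= x; move: (hf x); rewrite !lee_fin => hx.
by rewrite ler_pdivrMl.
Qed.

Lemma ge0_integralZl_nonmeas (k : R) (f : T -> R) :
  0 <= k -> (forall x, 0 <= f x) ->
  (\int[mu]_x (k * f x)%:E = k%:E * \int[mu]_x (f x)%:E)%E.
Proof.
move=> k0 f0; have [->|k_neq0] := eqVneq k 0.
  by rewrite mul0e; under eq_integral do rewrite mul0r; rewrite integral0.
have kp : 0 < k by rewrite lt_def k_neq0.
apply/le_anti; rewrite ge0_integralZl_le //=.
have ki : 0 < k^-1 by rewrite invr_gt0.
have := @ge0_integralZl_le k^-1 (fun x => k * f x) ki (fun x => mulr_ge0 k0 (f0 x)).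
under eq_integral do rewrite mulrA mulVf ?gt_eqF // mul1r.
rewrite -(@lee_pmul2l _ k%:E) ?lte_fin // muleA -EFinM mulfV ?gt_eqF //.
by rewrite mul1e.
Qed.

(* Only [g] needs to be measurable: a simple [h <= g + f] satisfies
   [h <= (h - g)^+ + g], a sum of measurable functions, and [(h - g)^+ <= f]. *)
Lemma ge0_integralD_le_nonmeas (g f : T -> R) : measurable_fun setT g ->
  (forall x, 0 <= g x) -> (forall x, 0 <= f x) ->
  (\int[mu]_x (g x + f x)%:E <= \int[mu]_x (g x)%:E + \int[mu]_x (f x)%:E)%E.
Proof.
move=> mg g0 f0.
rewrite [leLHS]ge0_integralE ?patch_setT => [|x _]; last by rewrite lee_fin addr_ge0.
apply: ge_ereal_sup => _ [h hf <-] /=.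
pose h' x := Num.max (h x - g x) 0.
have mh' : measurable_fun setT h'.
  apply: measurable_maxr; last exact: measurable_cst.
  exact: measurable_funB.
have h'0 x : 0 <= h' x by rewrite le_max lexx orbT.
have -> : sintegral mu h = (\int[mu]_x (h x)%:E)%E.
  by rewrite integral_nnsfun // patch_setT.
apply: (@le_trans _ _ (\int[mu]_x (h' x + g x)%:E)%E).
  apply: ge0_le_integral => //.
  - by move=> x _; rewrite lee_fin.
  - exact/measurable_EFinP.
  - by apply/measurable_EFinP; apply: measurable_funD.
  - by move=> x _; rewrite lee_fin -lerBlDr le_max lexx.
rewrite (@ge0_integralD _ _ _ mu setT measurableT (fun x => (h' x)%:E)
  (fun x => (g x)%:E)) //;
  try by [move=> x _; rewrite lee_fin | exact/measurable_EFinP].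
rewrite addeC leeD // ge0_le_integral_nonmeas // => x.
by rewrite ge_max f0 andbT lerBlDl; move: (hf x); rewrite lee_fin.
Qed.

End ge0_integral_nonmeasurable.

Section probability_lemmas.
Context d (T : measurableType d) (R : realType) (P : probability T R).

Lemma probability_fineK (A : set T) : measurable A -> P A = (fine (P A))%:E.
Proof. by move=> mA; rewrite fineK // fin_num_measure. Qed.

Lemma probability_fine_itv (A : set T) : measurable A -> 0 <= fine (P A) <= 1.
Proof.
move=> mA; rewrite fine_ge0 ?measure_ge0 //= -lee_fin -probability_fineK //.
exact: probability_le1.
Qed.

Lemma integral_cst1 : (\int[P]_y (1 : R)%:E = 1)%E.
Proof. by rewrite integral_cst //= probability_setT mul1e. Qed.

Lemma integral_indic_fine (A : set T) : measurable A ->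
  (\int[P]_y (\1_A y)%:E = (fine (P A))%:E)%E.
Proof. by move=> mA; rewrite integral_indic // setIT -probability_fineK. Qed.

Lemma integral_setE (A : set T) (f : T -> R) :
  (\int[P]_(y in A) (f y)%:E = \int[P]_y (\1_A y * f y)%:E)%E.
Proof.
rewrite integral_mkcond; apply: eq_integral => y _.
by rewrite /patch indicE; case: (y \in A); rewrite ?mul1r ?mul0r.
Qed.

End probability_lemmas.

Lemma perturbed_ratio_bounds (R : realFieldType) (w j a u S delta : R) :
  0 <= w <= 1 -> 0 <= delta <= 2^-1 -> 1 <= a <= 1 + delta -> 1 <= u <= S ->
  S * (1 - delta) <= 1 -> w / a <= j <= S / a * (w + delta) ->
  w * (1 - 2 * delta) <= j / u <= w + 4 * delta.
Proof.
move=> /andP[w0 w1] /andP[d0 d1] /andP[a1 a2] /andP[u1 uS] Sd /andP[jlo jhi].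
have a0 : 0 < a by lra.
have u0 : 0 < u by lra.
rewrite ler_pdivrMr // in jlo.
rewrite mulrAC ler_pdivlMr // in jhi.
have j0 : 0 <= j by nra.
have S0 : 0 <= S by lra.
apply/andP; split.
  rewrite ler_pdivlMr //.
  have hw : w <= j * (1 + delta) by nra.
  have hS : (1 - 2 * delta) * S * (1 + delta) <= 1 by nra.
  have wd0 : 0 <= w * (1 - 2 * delta) by apply: mulr_ge0; lra.
  have hu := ler_wpM2l wd0 uS.
  nra.
rewrite ler_pdivrMr //.
have hj : j <= S * (w + delta) by nra.
have hS : S * (w + delta) * (1 - delta) <= w + delta by nra.
nra.
Qed.

(* [P^(dy) = H y / Z * W(dy)] and the kernel [E x y * P^(dy)] has the positive
   eigenfunction [Psi] with eigenvalue [rho]. *)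
Section eigen_kernel.
Context d (T : measurableType d) (R : realType) (W : probability T R).
Variables (E : T -> T -> R) (H Psi : T -> R) (rho c C : R).
Let Z := Rintegral W setT H.
Hypothesis E_ge1 : forall x y, 1 <= E x y.
Hypothesis H_ge1 : forall y, 1 <= H y.
Hypothesis c_gt0 : 0 < c.
Hypothesis Psi_bnd : forall y, c <= Psi y <= C.
Hypothesis rho_gt0 : 0 < rho.
Hypothesis Psi_norm : (\int[W]_y (Psi y * (H y / Z))%:E = 1)%E.
Hypothesis Psi_eigen : forall x,
  (\int[W]_y (E x y * Psi y * (H y / Z))%:E = (rho * Psi x)%:E)%E.

Let H_ge0 y : 0 <= H y. Proof. exact: le_trans ler01 (H_ge1 y). Qed.
Let Psi_ge0 y : 0 <= Psi y.
Proof. by case/andP: (Psi_bnd y) => cP _; apply: le_trans cP; apply: ltW. Qed.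

(* If [H] had infinite integral, [Z] would be [fine +oo = 0] and the
   normalisation [Psi_norm] would read [0 = 1]. *)
Lemma integral_H_fin : (\int[W]_y (H y)%:E = Z%:E)%E.
Proof.
have H_int_ge0 : (0 <= \int[W]_y (H y)%:E)%E by apply: integral_ge0 => y _; rewrite lee_fin.
move: Psi_norm H_int_ge0; rewrite /Z /Rintegral.
case: (\int[W]_(y in setT) (H y)%:E)%E => [r| |] //= norm _.
move: norm; under eq_integral do rewrite invr0 !mulr0.
by rewrite integral0 => /(congr1 fine) /= /eqP; rewrite eq_sym oner_eq0.
Qed.

Lemma Z_ge1 : 1 <= Z.
Proof.
rewrite -lee_fin -integral_H_fin -(integral_cst1 W).
exact: ge0_le_integral_nonmeas.
Qed.

Let Z_gt0 : 0 < Z. Proof. exact: lt_le_trans ltr01 Z_ge1. Qed.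

Lemma rho_Psi_ge1 x : 1 <= rho * Psi x.
Proof.
rewrite -lee_fin -Psi_eigen -Psi_norm; apply: ge0_le_integral_nonmeas.
  by move=> y; rewrite mulr_ge0 // divr_ge0 // ltW.
by move=> y; rewrite -mulrA ler_peMl // mulr_ge0 // divr_ge0 // ltW.
Qed.

Lemma rho_ge1 : 1 <= rho.
Proof.
have int_HZ : (\int[W]_y (Z^-1 * H y)%:E = 1)%E.
  rewrite ge0_integralZl_nonmeas ?invr_ge0 ?ltW // integral_H_fin -EFinM.
  by rewrite mulVf ?gt_eqF.
have rhoE : (rho%:E = \int[W]_y (rho * (Psi y * (H y / Z)))%:E)%E.
  rewrite ge0_integralZl_nonmeas ?Psi_norm ?mule1 ?ltW // => y.
  by rewrite mulr_ge0 // divr_ge0 // ltW.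
rewrite -lee_fin -int_HZ rhoE.
apply: ge0_le_integral_nonmeas => y.
  by rewrite mulr_ge0 // invr_ge0 ltW.
rewrite mulrA [Z^-1 * _]mulrC -[X in X <= _]mul1r.
by apply: ler_wpM2r; [rewrite divr_ge0 // ltW | exact: rho_Psi_ge1].
Qed.

Let E_ge0 x y : 0 <= E x y. Proof. exact: le_trans ler01 (E_ge1 x y). Qed.

Lemma integral_kernel_le x :
  (\int[W]_y (E x y * H y)%:E <= (Z / c * (rho * C))%:E)%E.
Proof.
have EH_le y : E x y * H y <= Z / c * (E x y * Psi y * (H y / Z)).
  have -> : Z / c * (E x y * Psi y * (H y / Z)) = E x y * H y * (Psi y / c).
    by field; rewrite !gt_eqF.
  rewrite ler_peMr ?mulr_ge0 // ler_pdivlMr // mul1r.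
  by case/andP: (Psi_bnd y).
apply: le_trans (ge0_le_integral_nonmeas _ _ EH_le) _.
  by move=> y; rewrite mulr_ge0.
rewrite ge0_integralZl_nonmeas; last 2 first.
- by rewrite divr_ge0 // ltW.
- by move=> y; rewrite !mulr_ge0 // invr_ge0 ltW.
rewrite Psi_eigen -EFinM lee_fin; apply: ler_wpM2l; first by rewrite divr_ge0 // ltW.
by apply: ler_wpM2l; [exact: ltW | case/andP: (Psi_bnd x)].
Qed.

Section perturbation.
Variables (F : T -> T -> R) (theta K : R).
Hypothesis Psi_meas : measurable_fun setT Psi.
Hypothesis F_ge0 : forall x y, 0 <= F x y.
Hypothesis K_ge0 : 0 <= K.
Hypothesis F_int : forall x, (\int[W]_y (F x y)%:E <= K%:E)%E.
Hypothesis theta_ge0 : 0 <= theta.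
Hypothesis EH_le : forall x y, E x y * H y <= 1 + theta * F x y.
Hypothesis delta_le : theta * K <= 2^-1.

Let delta := theta * K.
Let delta_ge0 : 0 <= delta. Proof. exact: mulr_ge0. Qed.

Let integral_addF_le x (a : T -> R) (k : R) :
  measurable_fun setT a -> (forall y, 0 <= a y) -> 0 <= k ->
  (\int[W]_y (a y + k * F x y)%:E <= \int[W]_y (a y)%:E + (k * K)%:E)%E.
Proof.
move=> ma a0 k0; apply: le_trans (ge0_integralD_le_nonmeas W ma a0 _) _.
  by move=> y; rewrite mulr_ge0.
rewrite ge0_integralZl_nonmeas // EFinM leeD2l //.
by apply: lee_wpmul2l (F_int x); rewrite lee_fin.
Qed.

Let S := sup [set rho * Psi z | z in [set: T]].

Let rho_Psi_le_S z : rho * Psi z <= S.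
Proof.
apply: ub_le_sup; last by exists z.
exists (rho * C) => _ [y _ <-]; rewrite ler_pM2l //.
by case/andP: (Psi_bnd y).
Qed.

Let S_ge1 (z : T) : 1 <= S. Proof. exact: le_trans (rho_Psi_ge1 z) (rho_Psi_le_S z). Qed.

Let kernel_le_S x y :
  E x y * Psi y * (H y / Z) <= S / (rho * Z) * (1 + theta * F x y).
Proof.
have -> : E x y * Psi y * (H y / Z) = Psi y / Z * (E x y * H y) by ring.
have -> : S / (rho * Z) = S / rho / Z by rewrite invfM mulrA.
apply: ler_pM; rewrite ?mulr_ge0 ?invr_ge0 ?(ltW Z_gt0) //.
by rewrite ler_wpM2r ?invr_ge0 ?(ltW Z_gt0) // ler_pdivlMr // mulrC.
Qed.

Let integral_le_S x (a f : T -> R) (m : R) :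
  measurable_fun setT a -> (forall y, 0 <= a y) -> (forall y, 0 <= f y) ->
  (forall y, f y <= S / (rho * Z) * (a y + theta * F x y)) ->
  (\int[W]_y (a y)%:E = m%:E)%E ->
  (\int[W]_y (f y)%:E <= (S / (rho * Z) * (m + delta))%:E)%E.
Proof.
move=> ma a0 f0 fle am.
have q0 : 0 <= S / (rho * Z).
  by rewrite divr_ge0 ?(le_trans ler01 (S_ge1 x)) // mulr_ge0 // ltW.
apply: le_trans (ge0_le_integral_nonmeas W f0 fle) _.
rewrite ge0_integralZl_nonmeas //; last by move=> y; rewrite addr_ge0 ?mulr_ge0.
rewrite [leRHS]EFinM; apply: lee_wpmul2l; first by rewrite lee_fin.
rewrite EFinD -am; exact: integral_addF_le.
Qed.

Lemma sup_rho_Psi_le (x0 : T) : S * (1 - delta) <= 1.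
Proof.
suff : S <= 1 + delta * S by nra.
apply: ge_sup; first by exists (rho * Psi x0), x0.
move=> _ [z _ <-]; rewrite -lee_fin -Psi_eigen.
set q := theta * (S / (rho * Z)).
have q0 : 0 <= q.
  by rewrite mulr_ge0 // divr_ge0 ?(le_trans ler01 (S_ge1 x0)) // mulr_ge0 // ltW.
have PsiZ_le y : Psi y / Z <= S / (rho * Z).
  by rewrite invfM mulrA ler_wpM2r ?invr_ge0 ?(ltW Z_gt0) // ler_pdivlMr // mulrC.
have kernel_le y : E z y * Psi y * (H y / Z) <= Psi y / Z + q * F z y.
  have -> : E z y * Psi y * (H y / Z) = Psi y / Z * (E z y * H y) by ring.
  apply: le_trans (ler_wpM2l _ (EH_le z y)) _; first by rewrite divr_ge0 // ltW.
  rewrite mulrDr mulr1 lerD2l mulrCA /q -mulrA.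
  by apply: ler_wpM2l => //; apply: ler_wpM2r.
apply: le_trans (ge0_le_integral_nonmeas W _ kernel_le) _.
  by move=> y; rewrite !mulr_ge0 // invr_ge0 ltW.
apply: le_trans (integral_addF_le z _ _ q0) _.
- by apply: measurable_funM => //; exact: measurable_cst.
- by move=> y; rewrite divr_ge0 // ltW.
have int_PsiZ : (\int[W]_y (Psi y / Z)%:E <= 1)%E.
  rewrite -Psi_norm; apply: ge0_le_integral_nonmeas => y.
    by rewrite divr_ge0 // ltW.
  rewrite mulrA; apply: ler_wpM2r; first by rewrite invr_ge0 ltW.
  exact: ler_peMr.
apply: le_trans (leeD2r _ int_PsiZ) _; rewrite -EFinD lee_fin lerD2l /q.
have -> : theta * (S / (rho * Z)) * K = delta * (S / (rho * Z)) by rewrite /delta; ring.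
have rhoZ_gt0 : 0 < rho * Z by rewrite mulr_gt0.
rewrite ler_wpM2l // ler_pdivrMr // ler_peMr ?(le_trans ler01 (S_ge1 x0)) //.
exact: mulr_ege1 rho_ge1 Z_ge1.
Qed.

Lemma rho_Z_le (x0 : T) : rho * Z <= 1 + delta.
Proof.
have S_gt0 : 0 < S by exact: lt_le_trans ltr01 (S_ge1 x0).
suff : S <= S / (rho * Z) * (1 + delta).
  by rewrite mulrAC ler_pdivlMr ?mulr_gt0 // ler_pM2l.
apply: ge_sup; first by exists (rho * Psi x0), x0.
move=> _ [z _ <-]; rewrite -lee_fin -Psi_eigen.
apply: (integral_le_S (a := cst 1)).
- exact: measurable_cst.
- by move=> y; rewrite ler01.
- by move=> y; rewrite !mulr_ge0 // invr_ge0 ltW.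
- exact: kernel_le_S.
- exact: integral_cst1.
Qed.

Lemma kernel_set_ge x (A : set T) : measurable A ->
  ((fine (W A) / (rho * Z))%:E <=
   \int[W]_(y in A) (E x y * Psi y * (H y / Z))%:E)%E.
Proof.
move=> mA; rewrite integral_setE.
have rhoZ_gt0 : 0 < rho * Z by rewrite mulr_gt0.
have -> : (fine (W A) / (rho * Z))%:E = (\int[W]_y ((rho * Z)^-1 * \1_A y)%:E)%E.
  rewrite ge0_integralZl_nonmeas; first by rewrite integral_indic_fine // -EFinM mulrC.
  - by rewrite invr_ge0 ltW.
  - by move=> y; rewrite indicE.
apply: ge0_le_integral_nonmeas => y; first by rewrite mulr_ge0 ?indicE // invr_ge0 ltW.
rewrite mulrC; apply: ler_wpM2l; first by rewrite indicE.
have -> : E x y * Psi y * (H y / Z) = E x y * H y * (Psi y / Z) by ring.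
apply: le_trans (ler_peMl _ (mulr_ege1 (E_ge1 x y) (H_ge1 y))); last first.
  by rewrite divr_ge0 // ltW.
rewrite invfM ler_wpM2r ?invr_ge0 ?(ltW Z_gt0) // -[rho^-1]mul1r ler_pdivrMr //.
by rewrite mulrC rho_Psi_ge1.
Qed.

Lemma kernel_set_le x (A : set T) : measurable A ->
  (\int[W]_(y in A) (E x y * Psi y * (H y / Z))%:E <=
   (S / (rho * Z) * (fine (W A) + delta))%:E)%E.
Proof.
move=> mA; rewrite integral_setE; apply: (integral_le_S (a := \1_A)).
- exact/measurable_indicP.
- by move=> y; rewrite indicE.
- by move=> y; rewrite indicE !mulr_ge0 // invr_ge0 ltW.
- move=> y; rewrite !indicE; case: (y \in A) => /=; rewrite ?mul1r ?mul0r ?add0r.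
    exact: kernel_le_S.
  by rewrite !mulr_ge0 // ?(le_trans ler01 (S_ge1 x)) // invr_ge0 mulr_ge0 // ltW.
- exact: integral_indic_fine.
Qed.

Lemma kernel_set_close x (A : set T) : measurable A -> exists p : R,
  (\int[W]_(y in A) (E x y * Psi y * (H y / Z))%:E * ((rho * Psi x)^-1)%:E = p%:E)%E
  /\ fine (W A) * (1 - 2 * delta) <= p <= fine (W A) + 4 * delta.
Proof.
move=> mA; have lo := kernel_set_ge x mA; have hi := kernel_set_le x mA.
set J := (\int[W]_(y in A) _)%E in lo hi *.
have J_fin : J \is a fin_num.
  by rewrite fin_numElt (lt_le_trans (ltNyr _) lo) (le_lt_trans hi (ltry _)).
exists (fine J / (rho * Psi x)); split; first by rewrite -{1}(fineK J_fin) -EFinM.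
apply: perturbed_ratio_bounds.
- exact: probability_fine_itv.
- by rewrite delta_ge0.
- by apply/andP; split; [exact: mulr_ege1 rho_ge1 Z_ge1 | exact: rho_Z_le].
- by apply/andP; split; [exact: rho_Psi_ge1 | exact: rho_Psi_le_S].
- exact: sup_rho_Psi_le.
- by apply/andP; split; rewrite -lee_fin fineK.
Qed.

End perturbation.

End eigen_kernel.

Lemma expR_mul_le (R : realType) (t Y : R) :
  0 <= t <= 1 -> expR (t * Y) <= 1 + t * expR Y.
Proof.
move=> t01.
have tin : Itv.spec (@Itv.num_sem R) (Itv.Real `[0%Z, 1%Z]) t.
  by rewrite /Itv.spec /Itv.num_sem /= num_real /= in_itv /= ?mulr0z ?mulr1z.
have := convex_expR (Itv.mk tin) Y 0.
rewrite !convR_line_path /line_path /= expR0 mulr0 add0r mulr1 => /le_trans; apply.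
by rewrite lerD2r gerBl; case/andP: t01.
Qed.

Lemma ln_inv_gt0 (R : realType) (eps : R) : 0 < eps < 1 -> 0 < ln eps^-1.
Proof. by case/andP => e0 e1; apply: ln_gt0; rewrite invf_gt1. Qed.

Lemma beta_eps_sqr (R : realType) (bh eps : R) : 0 < eps < 1 ->
  beta_eps bh eps ^+ 2 = bh ^+ 2 / ln eps^-1.
Proof.
by move=> epsI; rewrite /beta_eps expr_div_n sqr_sqrtr // ltW // ln_inv_gt0.
Qed.

Lemma beta_eps_ratio_le (R : realType) (bh s eps : R) :
  0 < bh -> 0 < s -> 0 < eps < 1 -> eps < expR (- (ln 2 / s)) ->
  beta_eps bh eps ^+ 2 / beta_eps bh 2^-1 ^+ 2 <= s.
Proof.
move=> bh_gt0 s_gt0 epsI; have /andP[eps_gt0 _] := epsI.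
rewrite -ltr_ln ?posrE ?expR_gt0 // expRK => lt_eps.
have ln2_gt0 : 0 < ln (2 : R) by apply: ln_gt0; rewrite ltr1n.
have lt_ln : ln 2 / s < ln eps^-1 by rewrite lnV ?posrE // ltrNr.
have lneps_gt0 : 0 < ln eps^-1 := lt_trans (divr_gt0 ln2_gt0 s_gt0) lt_ln.
have halfI : 0 < (2^-1 : R) < 1 by apply/andP; split; lra.
rewrite !beta_eps_sqr // invrK.
have -> : bh ^+ 2 / ln eps^-1 / (bh ^+ 2 / ln 2) = ln 2 / ln eps^-1.
  by field; rewrite !gt_eqF ?exprn_gt0.
by rewrite ler_pdivrMr // mulrC -ler_pdivrMr // ltW.
Qed.

Section gibbs_weights.
Variables (R : realType) (phi : R -> R) (psi : R * R -> R) (bh : R).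
Hypothesis phi_ge0 : forall s, 0 <= phi s.
Hypothesis psi_ge0 : forall y, 0 <= psi y.

Let int01sq_Rker_ge0 (g : R -> R -> R * R) :
  0 <= int01sq (fun s u => Rker phi psi (s - u) (g s u)).
Proof.
apply: Rintegral_ge0 => s _; apply: Rintegral_ge0 => u _.
by apply: mulr_ge0; apply: Rintegral_ge0 => v _; rewrite mulr_ge0.
Qed.

Lemma Ieps_ge0 eps x y : 0 <= Ieps phi psi bh eps x y.
Proof. by rewrite mulr_ge0 ?sqr_ge0. Qed.

Lemma Hdens_ge1 eps y : 1 <= Hdens phi psi bh eps y.
Proof.
apply: le_trans (expR_ge1Dx _); rewrite lerDl mulr_ge0 //.
by rewrite divr_ge0 ?sqr_ge0.
Qed.

Lemma expR_Ieps_Hdens_le eps eps' x y :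
  let theta := beta_eps bh eps ^+ 2 / beta_eps bh eps' ^+ 2 in
  beta_eps bh eps' != 0 -> theta <= 1 ->
  expR (Ieps phi psi bh eps x y) * Hdens phi psi bh eps y <=
  1 + theta * (expR (Ieps phi psi bh eps' x y) * Hdens phi psi bh eps' y).
Proof.
move=> theta b'_neq0 theta_le1; rewrite /Hdens /Ieps -!expRD.
set J := int01sq _; set L := int01sq _.
set b := beta_eps bh eps ^+ 2; set b' := beta_eps bh eps' ^+ 2.
have -> : b * J + b / 2 * L = theta * (b' * J + b' / 2 * L).
  by rewrite /theta -/b -/b'; field; rewrite expf_neq0.
by apply: expR_mul_le; rewrite theta_le1 divr_ge0 ?sqr_ge0.
Qed.

End gibbs_weights.

Section transition_kernel_limit.
Variables (R : realType) (phi : R -> R) (psi : R * R -> R) (bh : R).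
Hypothesis phi_ge0 : forall s, 0 <= phi s.
Hypothesis psi_ge0 : forall y, 0 <= psi y.
Hypothesis bh_gt0 : 0 < bh.
Variables (W : probability (@Omega1 R) R) (rho : R -> R) (Psi : R -> @Omega1 R -> R).
Hypothesis rho_gt0 : forall eps, 0 < eps < 1 -> 0 < rho eps.
Hypothesis Psi_meas : forall eps, 0 < eps < 1 -> measurable_fun setT (Psi eps).
Hypothesis Psi_bounds : forall eps, 0 < eps < 1 ->
  exists c C : R, [/\ 0 < c, 0 < C & forall y, c <= Psi eps y <= C].
Hypothesis Psi_norm : forall eps, 0 < eps < 1 ->
  intPhat phi psi bh eps W setT (Psi eps) = 1%E.
Hypothesis Psi_eigen : forall eps, 0 < eps < 1 -> forall x,
  intPhat phi psi bh eps W setT (fun y => expR (Ieps phi psi bh eps x y) * Psi eps y)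
  = (rho eps * Psi eps x)%:E.

Let E eps x y := expR (Ieps phi psi bh eps x y).
Let E_ge1 eps x y : 1 <= E eps x y.
Proof. by rewrite -expR0 ler_expR Ieps_ge0. Qed.

Let eps_ref : R := 2^-1.
Let eps_refI : 0 < eps_ref < 1. Proof. by rewrite /eps_ref; apply/andP; split; lra. Qed.

Let H eps := Hdens phi psi bh eps.
Let H_ge1 eps : forall y, 1 <= H eps y := Hdens_ge1 bh phi_ge0 psi_ge0 eps.

Lemma integral_weight_half_le : exists2 K : R, 0 <= K & forall x,
  (\int[W]_y (E eps_ref x y * H eps_ref y)%:E <= K%:E)%E.
Proof.
have [c [C [c_gt0 C_gt0 Psi_bnd]]] := Psi_bounds eps_refI.
have Z_ge1 := Z_ge1 (H_ge1 eps_ref) (Psi_norm eps_refI).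
exists (Rintegral W setT (H eps_ref) / c * (rho eps_ref * C)).
  by rewrite !mulr_ge0 ?invr_ge0 ?ltW ?rho_gt0 // (lt_le_trans ltr01 Z_ge1).
exact: integral_kernel_le (E_ge1 eps_ref) (H_ge1 eps_ref) c_gt0 Psi_bnd
  (rho_gt0 eps_refI) (Psi_norm eps_refI) (Psi_eigen eps_refI).
Qed.

Lemma pihat_close (t : R) : 0 < t <= 2^-1 -> exists2 eps0 : R, 0 < eps0 &
  forall eps, 0 < eps < 1 -> eps < eps0 -> forall x (A : set (@Omega1 R)),
  measurable A -> exists p : R,
    pihat phi psi bh eps W (rho eps) (Psi eps) x A = p%:E /\
    fine (W A) * (1 - 2 * t) <= p <= fine (W A) + 4 * t.
Proof.
case/andP=> t_gt0 t_le.
have [K K_ge0 F_int] := integral_weight_half_le.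
set s := t / (K + 1).
have K1_gt0 : 0 < K + 1 by rewrite ltr_wpDl.
have s_le_t : s <= t.
  by rewrite ler_pdivrMr // ler_peMr ?(ltW t_gt0) // lerDr.
exists (expR (- (ln 2 / s))); first exact: expR_gt0.
move=> eps epsI eps_lt x A mA.
set theta := beta_eps bh eps ^+ 2 / beta_eps bh eps_ref ^+ 2.
have theta_le_s : theta <= s by apply: beta_eps_ratio_le; rewrite ?divr_gt0.
have theta_ge0 : 0 <= theta by rewrite divr_ge0 ?sqr_ge0.
have delta_le : theta * K <= t.
  apply: le_trans (ler_wpM2r K_ge0 theta_le_s) _.
  rewrite /s mulrAC ler_pdivrMr //.
  by apply: ler_wpM2l; lra.
have beta_ref_neq0 : beta_eps bh eps_ref != 0.
  by rewrite gt_eqF // divr_gt0 // sqrtr_gt0 ln_inv_gt0.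
have EH_le x' y : E eps x' y * H eps y <= 1 + theta * (E eps_ref x' y * H eps_ref y).
  by apply: expR_Ieps_Hdens_le => //; rewrite -/theta; lra.
have [c [C [c_gt0 _ Psi_bnd]]] := Psi_bounds epsI.
have F_ge0 x' y : 0 <= E eps_ref x' y * H eps_ref y.
  by rewrite mulr_ge0 // (le_trans ler01).
have delta_le_half : theta * K <= 2^-1 by lra.
have [p [p_eq p_bnd]] := kernel_set_close (E_ge1 eps) (H_ge1 eps) c_gt0 Psi_bnd
  (rho_gt0 epsI) (Psi_norm epsI) (Psi_eigen epsI) (Psi_meas epsI) F_ge0 K_ge0 F_int
  theta_ge0 EH_le delta_le_half x mA.
exists p; split => //.
have [w_ge0 _] := andP (probability_fine_itv W mA).
case/andP: p_bnd => lo hi; apply/andP; split; last by lra.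
by apply: le_trans lo; rewrite ler_wpM2l // lerD2l lerN2 ler_wpM2l.
Qed.

End transition_kernel_limit.

Theorem proposition3p1 (R : realType)
  (phi : R -> R) (psi : R * R -> R)
  (phi_ge0 : forall s, 0 <= phi s) (psi_ge0 : forall y, 0 <= psi y)
  (phi_smooth : smooth (phi : R^o -> R^o)) (psi_smooth : smooth (psi : R * R -> R^o))
  (phi_supp : forall s, phi s != 0 -> 0 <= s <= 1)
  (psi_supp : forall y, psi y != 0 -> eucl y <= 2^-1)
  (psi_sym : forall y, psi (- y) = psi y)
  (bh : R) (bh_gt0 : 0 < bh)
  (W : probability (@Omega1 R) R) (W_wiener : is_wiener W)
  (rho : R -> R) (Psi : R -> @Omega1 R -> R)
  (rho_gt0 : forall eps, 0 < eps < 1 -> 0 < rho eps)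
  (Psi_meas : forall eps, 0 < eps < 1 -> measurable_fun setT (Psi eps))
  (Psi_bounds : forall eps, 0 < eps < 1 ->
     exists c C : R, [/\ 0 < c, 0 < C & forall y, c <= Psi eps y <= C])
  (Psi_norm : forall eps, 0 < eps < 1 ->
     intPhat phi psi bh eps W setT (Psi eps) = 1%E)
  (Psi_eigen : forall eps, 0 < eps < 1 -> forall x,
     intPhat phi psi bh eps W setT
       (fun y => expR (Ieps phi psi bh eps x y) * Psi eps y)
     = (rho eps * Psi eps x)%:E)
  (rho_largest : forall eps, 0 < eps < 1 ->
     forall (lam : R) (g : @Omega1 R -> R),
       measurable_fun setT g -> (exists M : R, forall y, `|g y| <= M) ->
       (exists y, g y != 0) ->
       (forall x, intPhat phi psi bh eps W setT
                    (fun y => expR (Ieps phi psi bh eps x y) * g y)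
                  = (lam * g x)%:E) ->
       lam <= rho eps) :
  (forall eta : R, 0 < eta -> exists2 eps0 : R, 0 < eps0 &
     forall eps, 0 < eps < 1 -> eps < eps0 -> forall x : @Omega1 R,
       (dTV (pihat phi psi bh eps W (rho eps) (Psi eps) x) W <= eta%:E)%E)
  /\
  (forall gamma : R, 0 < gamma < 1 -> exists2 eps0 : R, 0 < eps0 &
     forall eps, 0 < eps < 1 -> eps < eps0 -> forall (x : @Omega1 R) (A : set (@Omega1 R)),
       measurable A ->
       (gamma%:E * W A <= pihat phi psi bh eps W (rho eps) (Psi eps) x A)%E).
Proof.
have close := pihat_close phi_ge0 psi_ge0 bh_gt0 rho_gt0 Psi_meas Psi_bounds
  Psi_norm Psi_eigen.
split=> [eta eta_gt0 | gamma /andP[gamma_gt0 gamma_lt1]].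
- set t := Num.min (eta / 4) 2^-1.
  have t_le : t <= eta / 4 by rewrite ge_min lexx.
  have t_gt0 : 0 < t by rewrite lt_min divr_gt0 //=; lra.
  have [|eps0 eps0_gt0 near_W] := close t; first by rewrite t_gt0 ge_min lexx orbT.
  exists eps0 => // eps epsI eps_lt x; apply: ge_ereal_sup => _ [A mA <-].
  have [p [-> /andP[lo hi]]] := near_W eps epsI eps_lt x A mA.
  have /andP[w_ge0 w_le1] := probability_fine_itv W mA.
  rewrite (probability_fineK W mA) -EFinB abse_EFin lee_fin ler_norml.
  have tw_le : t * fine (W A) <= t by rewrite ler_piMr // ltW.
  by apply/andP; split; lra.
- set t := Num.min ((1 - gamma) / 2) 2^-1.
  have t_le : t <= (1 - gamma) / 2 by rewrite ge_min lexx.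
  have t_gt0 : 0 < t by rewrite lt_min divr_gt0 //= ?subr_gt0; lra.
  have [|eps0 eps0_gt0 near_W] := close t; first by rewrite t_gt0 ge_min lexx orbT.
  exists eps0 => // eps epsI eps_lt x A mA.
  have [p [-> /andP[lo _]]] := near_W eps epsI eps_lt x A mA.
  have /andP[w_ge0 _] := probability_fine_itv W mA.
  rewrite (probability_fineK W mA) -EFinM lee_fin; apply: le_trans lo.
  by rewrite mulrC ler_wpM2l //; lra.
Qed.
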